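(* Suppose $u=u_1\ldots u_n$ and $v=v_1\ldots v_n$ in $\mathbb{P}^*$ are rearrangements of each other and both have increasing/decreasing factorizations. For $1\le i\le n-1$ let $s_i(u)=u_{i+1}\ldots u_n$ and $s_i(v)=v_{i+1}\ldots v_n$. Then for all $1\le i\le n-1$, $$d_i(u)+\Sigma(s_i(u))=d_i(v)+\Sigma(s_i(v)).$$
   Context: $\mathbb{P}^*$ is the set of finite words over the positive integers; $\Sigma(w)$ is the sum of the letters of $w$. A word $u=u_1\ldots u_n$ has an increasing/decreasing factorization if $u_1\le\cdots\le u_n$ or there is $k<n$ with $u_1\le\cdots\le u_k>u_{k+1}\ge\cdots\ge u_n$. For $1\le i\le n-1$, $D^{(i)}(u)=\{n-i+j:1\le j\le i,\ u_j>u_{n-i+j}\}$ and $d_i(u)=\sum_{n-i+j\in D^{(i)}(u)}(u_j-u_{n-i+j})$. A rearrangement of $u$ is a word obtained by permuting its letters. *)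

From mathcomp Require Import all_boot.
Set Implicit Arguments. Unset Strict Implicit. Unset Printing Implicit Defensive.

(* Words over positive integers: seq nat with all letters > 0.
   1-based letter access: letter u j = u_j = nth 0 u (j-1). *)
Definition pword (u : seq nat) : bool := all (fun a => 0 < a) u.

Definition letter (u : seq nat) (j : nat) : nat := nth 0 u j.-1.

Definition Sigma (w : seq nat) : nat := sumn w.

Definition inc_dec_fact (u : seq nat) : Prop :=
  sorted leq u \/
  exists k, 1 <= k < size u /\ sorted leq (take k u) /\
            letter u k > letter u k.+1 /\ sorted geq (drop k u).

Definition Dset (i : nat) (u : seq nat) : seq nat :=
  [seq size u - i + j | j <- iota 1 i & letter u j > letter u (size u - i + j)].

Definition d (i : nat) (u : seq nat) : nat :=
  \sum_(p <- Dset i u) (letter u (p - (size u - i)) - letter u p).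

Definition s (i : nat) (u : seq nat) : seq nat := drop i u.

From mathcomp Require Import all_boot zify.

Set Implicit Arguments.
Unset Strict Implicit.
Unset Printing Implicit Defensive.

(* Writing m = n - i and u_j = min(u_j, u_(j+m)) + (u_j - u_(j+m))^+, one gets
   d_i(u) + Sigma(s_i(u)) = Sigma(u) - sum_(1 <= j <= i) min(u_j, u_(j+m)).
   Sigma(u) only depends on the multiset of letters, and so does the sum of
   minima when u is unimodal: a smallest letter of a unimodal word sits at one
   of its ends, where it occurs in exactly one of the pairs (u_j, u_(j+m)) and
   is the minimum of that pair; removing it leaves a shorter unimodal word. *)

Definition unimodal (u : seq nat) : Prop :=
  exists k, sorted leq (take k u) /\ sorted geq (drop k u).

Definition shift_min_sum (m : nat) (u : seq nat) : nat :=
  \sum_(j < size u - m) minn (nth 0 u j) (nth 0 u (j + m)).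

Lemma inc_dec_fact_unimodal u : inc_dec_fact u -> unimodal u.
Proof.
case=> [u_sorted | [k [_ [sorted_take [_ sorted_drop]]]]]; last by exists k.
by exists (size u); rewrite take_size drop_size u_sorted.
Qed.

Lemma unimodal_behead x u : unimodal (x :: u) -> unimodal u.
Proof.
case=> [[|k] [sorted_take sorted_drop]].
  by exists 0; rewrite take0 drop0; move: sorted_drop => /path_sorted.
by exists k; move: sorted_take => /path_sorted.
Qed.

Lemma unimodal_belast u x : unimodal (rcons u x) -> unimodal u.
Proof.
case=> k [sorted_take sorted_drop].
have [le_k_u | lt_u_k] := leqP k (size u).
  exists k; split; first by move: sorted_take; rewrite -cats1 takel_cat.
  move: sorted_drop; rewrite drop_rcons //.
  exact/subseq_sorted/subseq_rcons/rev_trans/leq_trans.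
exists (size u); rewrite take_size drop_size; split=> //.
move: sorted_take; rewrite take_oversize ?size_rcons //.
exact/subseq_sorted/subseq_rcons/leq_trans.
Qed.

Lemma sorted_leq_all_head x s : sorted leq (x :: s) -> all (leq x) (x :: s).
Proof. by move=> /= /(order_path_min leq_trans); rewrite leqnn. Qed.

Lemma sorted_geq_all_last x s : sorted geq (x :: s) -> all (leq (last x s)) (x :: s).
Proof.
elim: s x => [|y s IHs] x /=; first by rewrite leqnn.
move=> /andP [le_y_x /IHs /= /andP [le_last_y ->]].
by rewrite le_last_y (leq_trans le_last_y le_y_x).
Qed.

Lemma unimodal_min_end u :
  unimodal u -> all (leq (head 0 u)) u \/ all (leq (last 0 u)) u.
Proof.
case=> k; rewrite -[in X in X \/ _](cat_take_drop k u) -[in X in _ \/ X](cat_take_drop k u).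
case: (take k u) => [|a A]; case: (drop k u) => [|b B] [up down].
- by left.
- by right; exact: sorted_geq_all_last.
- by left; rewrite cats0; exact: sorted_leq_all_head.
move/sorted_leq_all_head: up => up; move/sorted_geq_all_last: down => down.
rewrite [head _ _]/= last_cat [last _ (b :: B)]/= !all_cat up down andbT.
have [le_a_lastB | lt_lastB_a] := leqP a (last b B); [left | right].
  by apply/allP=> z /(allP down); apply: leq_trans.
by apply/allP=> z /(allP up); apply/leq_trans/ltnW.
Qed.

Lemma shift_min_sum_small m u : size u <= m -> shift_min_sum m u = 0.
Proof. by rewrite /shift_min_sum -subn_eq0 => /eqP ->; rewrite big_ord0. Qed.

Lemma shift_min_sum_cons m x u : 0 < m -> m <= size u -> all (leq x) (x :: u) ->
  shift_min_sum m (x :: u) = x + shift_min_sum m u.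
Proof.
case: m => // m _ le_m_u /andP [_ x_min].
rewrite /shift_min_sum /= subSS -subnSK // big_ord_recl /=.
by congr (_ + _); apply/minn_idPl/(allP x_min)/mem_nth.
Qed.

Lemma shift_min_sum_rcons m u x : 0 < m -> m <= size u -> all (leq x) (rcons u x) ->
  shift_min_sum m (rcons u x) = shift_min_sum m u + x.
Proof.
move=> m_gt0 le_m_u x_min.
rewrite /shift_min_sum size_rcons subSn // big_ord_recr /=.
congr (_ + _).
  apply: eq_bigr => j _; have := ltn_ord j.
  by rewrite !nth_rcons => lt_j; rewrite !ifT //; lia.
rewrite subnK // !nth_rcons ltnn eqxx ifT; last by lia.
apply/minn_idPr/(allP x_min); rewrite mem_rcons mem_behead // mem_nth //.
by rewrite ltn_subrL m_gt0 (leq_trans m_gt0 le_m_u).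
Qed.

Lemma shift_min_sum_peel_min m u : 0 < m -> m < size u -> unimodal u ->
  exists x w, [/\ unimodal w, perm_eq u (x :: w), all (leq x) u
                & shift_min_sum m u = x + shift_min_sum m w].
Proof.
move=> m_gt0 lt_m_u uni_u.
case: (unimodal_min_end uni_u).
  case: u lt_m_u uni_u => // x w lt_m_w uni_u x_min.
  exists x, w; split=> //; first exact: unimodal_behead uni_u.
  by rewrite shift_min_sum_cons.
case/lastP: u lt_m_u uni_u => // w x; rewrite size_rcons last_rcons => lt_m_w uni_u x_min.
exists x, w; split=> //; first exact: unimodal_belast uni_u.
  by rewrite -cats1 perm_catC.
by rewrite shift_min_sum_rcons // addnC.
Qed.

Lemma perm_unimodal_shift_min_sum m u v : 0 < m ->
  unimodal u -> unimodal v -> perm_eq u v -> shift_min_sum m u = shift_min_sum m v.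
Proof.
move=> m_gt0; elim: {u}(size u) {-2}u (erefl (size u)) v => [|n IHn] u size_u v uni_u uni_v uv.
  by rewrite !shift_min_sum_small // -?(perm_size uv) size_u.
have [le_u_m | lt_m_u] := leqP (size u) m.
  by rewrite !shift_min_sum_small // -?(perm_size uv).
have lt_m_v : m < size v by rewrite -(perm_size uv).
have [x [u' [uni_u' uu' x_min ->]]] := shift_min_sum_peel_min m_gt0 lt_m_u uni_u.
have [y [v' [uni_v' vv' y_min ->]]] := shift_min_sum_peel_min m_gt0 lt_m_v uni_v.
have eq_xy : x = y.
  apply/eqP; rewrite eqn_leq (allP x_min) ?(allP y_min) //.
    by rewrite -(perm_mem uv) (perm_mem uu') mem_head.
  by rewrite (perm_mem uv) (perm_mem vv') mem_head.
subst y; congr (_ + _).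
have u'v' : perm_eq u' v'.
  by rewrite -(perm_cons x) -(permPl uu') (perm_trans uv vv').
by apply: IHn u'v' => //; move: (perm_size uu') => /=; rewrite size_u => -[].
Qed.

Lemma d_sum_subn i u :
  d i u = \sum_(j < i) (nth 0 u j - nth 0 u (j + (size u - i))).
Proof.
rewrite /d /Dset big_map big_filter big_mkcond (iotaDl 1 0) big_map.
have -> : iota 0 i = index_iota 0 i by rewrite /index_iota subn0.
rewrite big_mkord; apply: eq_bigr => j _; rewrite addKn /letter /= addnS addnC.
by case: ifP => // /negbT; rewrite -leqNgt -subn_eq0 => /eqP ->.
Qed.

Lemma d_shift_min_sum_drop i u : i <= size u ->
  d i u + shift_min_sum (size u - i) u + sumn (drop i u) = sumn u.
Proof.
move=> le_i_u; rewrite /shift_min_sum subKn // d_sum_subn -big_split /=.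
under eq_bigr => j _ do rewrite minnE subnKC ?leq_subr //.
rewrite -(big_mkord xpredT (nth 0 u)) -(big_map (nth 0 u) xpredT id) /index_iota subn0.
by rewrite map_nth_iota0 // -sumnE -sumn_cat cat_take_drop.
Qed.

Lemma d_add_Sigma_s i u : i <= size u ->
  d i u + Sigma (s i u) = Sigma u - shift_min_sum (size u - i) u.
Proof. by move=> le_i_u; rewrite /Sigma /s -(d_shift_min_sum_drop le_i_u) addnAC addnK. Qed.

Theorem lemma3 (u v : seq nat) :
  pword u -> pword v -> perm_eq u v ->
  inc_dec_fact u -> inc_dec_fact v ->
  forall i, 1 <= i <= (size u).-1 ->
    d i u + Sigma (s i u) = d i v + Sigma (s i v).
Proof.
move=> _ _ uv fact_u fact_v i /andP [i_gt0 le_i_u].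
have size_v : size v = size u by rewrite (perm_size uv).
have lt_i_u : i < size u by lia.
rewrite !d_add_Sigma_s ?size_v 1?ltnW // /Sigma (perm_sumn uv).
by rewrite (perm_unimodal_shift_min_sum _ (inc_dec_fact_unimodal fact_u)
             (inc_dec_fact_unimodal fact_v) uv) ?subn_gt0.
Qed.
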